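(* Let $\mathcal{T}$ be a planar triangulation, let $m\in\mathbb{Z}_{\ge 0}$ and $r\in\mathbb{Z}_{\ge -1}$, and let $\mathbf{r}$ be a smoothness distribution with $\mathbf{r}(\tau)\in\{r,-1\}$ for every interior edge $\tau$. Assume $\mathcal{Q}^{\mathbf{r}}$ is lower-acyclic. Let $\tau$ be an interior edge with end-points $\gamma$ and $\gamma'$ such that $\mathbf{r}(\tau)=r$. If $\tau'$ is an interior edge incident on $\gamma$ with $\mathbf{r}(\tau')=-1$, then $\mathcal{Q}^{\mathbf{s}}$ is also lower-acyclic, where $\mathbf{s}(\tau'')=\mathbf{r}(\tau'')$ for every interior edge $\tau''\neq\tau$ and $\mathbf{s}(\tau)=-1$.
   Context: $\mathcal{T}$ is a finite planar mesh: a subdivision of a closed polygonal region $\Omega\subset\mathbb{R}^2$ (possibly not simply connected) into closed polygonal faces (here triangles) meeting along straight edges and vertices. $\mathcal{T}_2,\mathcal{T}_1,\mathcal{T}_0$ denote the faces, edges and vertices; an edge or vertex is interior if it is not contained in $\partial\Omega$, and $\mathcal{T}^\circ_1,\mathcal{T}^\circ_0$ denote the interior edges and interior vertices. ${\mathcal{P}}_m$ is the space of real bivariate polynomials of total degree at most $m$; for polynomials $f_1,\dots,f_k$, $\langle f_1,\dots,f_k\rangle$ denotes the subspace of ${\mathcal{P}}_m$ consisting of all polynomial combinations $\sum g_if_i$ lying in ${\mathcal{P}}_m$. A smoothness distribution is a map $\mathbf{r}:\mathcal{T}^\circ_1\to\mathbb{Z}_{\ge -1}$. For $\tau\in\mathcal{T}^\circ_1$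 let $\ell_\tau$ be a nonzero affine-linear polynomial vanishing on $\tau$ and put $\mathfrak{J}^{\mathbf r}_\tau=\langle \ell_\tau^{\mathbf r(\tau)+1}\rangle$ (which is all of ${\mathcal{P}}_m$ when $\mathbf r(\tau)=-1$); for $\gamma\in\mathcal{T}^\circ_0$ put $\mathfrak{J}^{\mathbf r}_\gamma=\sum_{\tau\ni\gamma}\mathfrak{J}^{\mathbf r}_\tau$, the sum over interior edges containing $\gamma$. After fixing orientations of faces and edges, $\mathcal{C}$ is the chain complex $\bigoplus_{\sigma\in\mathcal{T}_2}{\mathcal{P}}_m\xrightarrow{\partial_2}\bigoplus_{\tau\in\mathcal{T}^\circ_1}{\mathcal{P}}_m\xrightarrow{\partial_1}\bigoplus_{\gamma\in\mathcal{T}^\circ_0}{\mathcal{P}}_m$ (in homological degrees $2,1,0$) whose maps are the cellular boundary maps of $\mathcal{T}$ relative to $\partial\Omega$ (incidence signs $\pm1$, boundary edges and vertices omitted). $\mathcal{I}^{\mathbf r}$ is the subcomplex $0\to\bigoplus_{\tau\in\mathcal{T}^\circ_1}\mathfrak{J}^{\mathbf r}_\tau\to\bigoplus_{\gamma\in\mathcal{T}^\circ_0}\mathfrak{J}^{\mathbf r}_\gamma$, and $\mathcal{Q}^{\mathbf r}=\mathcal{C}/\mathcal{I}^{\mathbf r}$. Then $H_2(\mathcal{Q}^{\mathbf r})$ is the spline space of piecewise polynomials in ${\mathcal{P}}_m$ on each face that are $C^{\mathbf r(\tau)}$ across each interior edge $\tau$. $\mathcal{Q}^{\mathbf r}$ is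 called lower-acyclic if $H_1(\mathcal{Q}^{\mathbf r})=H_0(\mathcal{Q}^{\mathbf r})=0$. *)

From HB Require Import structures.
From mathcomp Require Import all_boot all_order all_algebra.
From mathcomp Require Import reals.
From mathcomp Require Import mpoly.
Set Implicit Arguments. Unset Strict Implicit. Unset Printing Implicit Defensive.
Import Order.TTheory GRing.Theory Num.Theory.
Local Open Scope ring_scope.

Section Mesh.
Variables (R : realType) (V : finType).
Variable pos : V -> 'rV[R]_2.
Variable faces : {set {set V}}.        (* triangles, as 3-sets of vertices *)

Definition in_conv (s : {set V}) (p : 'rV[R]_2) : Prop :=
  exists lam : V -> R,
    [/\ forall x, x \in s -> 0 <= lam x,
        \sum_(x in s) lam x = 1 &
        p = \sum_(x in s) lam x *: pos x].

Definition aff_indep (s : {set V}) : Prop :=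
  forall lam : V -> R,
    \sum_(x in s) lam x = 0 -> \sum_(x in s) lam x *: pos x = 0 ->
    forall x, x \in s -> lam x = 0.

Definition face_adj : rel {set V} :=
  fun s t => [&& s \in faces, t \in faces & ~~ [disjoint s & t]].

(* A planar triangulation: a finite geometric (conforming) simplicial
   2-complex in R^2, pure (every vertex lies in a triangle), whose
   underlying region is connected. *)
Definition is_planar_triangulation : Prop :=
  [/\ forall s, s \in faces -> #|s| = 3,
      forall s, s \in faces -> aff_indep s,
      forall v : V, exists2 s, s \in faces & v \in s,
      forall s t p, s \in faces -> t \in faces ->
        in_conv s p -> in_conv t p -> in_conv (s :&: t) p &
      forall s t, s \in faces -> t \in faces -> connect face_adj s t].

(* edges are 2-sets of vertices; number of triangles containing an edge *)
Definition nfaces_on (e : {set V}) : nat := #|[set s in faces | e \subset s]|.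

Definition interior_edge (e : {set V}) : bool := (#|e| == 2) && (nfaces_on e == 2).
Definition boundary_edge (e : {set V}) : bool := (#|e| == 2) && (nfaces_on e == 1).
Definition interior_vertex (v : V) : bool :=
  [forall e : {set V}, boundary_edge e ==> (v \notin e)].

Notation poly := {mpoly R[2]}.

(* P_m : total degree <= m *)
Definition inPm (m : nat) (p : poly) : bool := (msize p <= m.+1)%N.

Definition xc (v : V) : R := pos v 0 0.
Definition yc (v : V) : R := pos v 0 1.

Definition ell (e : {set V}) : poly :=
  match enum e with
  | u :: w :: _ =>
      (yc w - yc u)%:MP * ('X_0 - (xc u)%:MP)
      - (xc w - xc u)%:MP * ('X_1 - (yc u)%:MP)
  | _ => 1
  end.

(* incidence sign for oriented simplices (vertices ordered by enum_rank):
   (-1)^i where i is the position of the vertex of s omitted in t *)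
Definition inc_sign (s t : {set V}) : poly :=
  \prod_(x in s :\: t)
     (-1) ^+ #|[set y in s | (enum_rank y < enum_rank x)%N]|.

Section Complex.
Variables (m : nat) (rr : {set V} -> int).

Definition expo (e : {set V}) : nat := absz (rr e + 1).

Definition inJedge (e : {set V}) (q : poly) : Prop :=
  inPm m q /\ exists g : poly, q = g * ell e ^+ expo e.

Definition inJvert (v : V) (q : poly) : Prop :=
  inPm m q /\
  exists g : {set V} -> poly,
    (forall e, interior_edge e -> v \in e -> inPm m (g e * ell e ^+ expo e)) /\
    q = \sum_(e : {set V} | interior_edge e && (v \in e)) g e * ell e ^+ expo e.

(* boundary maps of C (relative to the boundary) *)
Definition bd2 (c2 : {set V} -> poly) (e : {set V}) : poly :=
  \sum_(s in faces | e \subset s) inc_sign s e * c2 s.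

Definition bd1 (c1 : {set V} -> poly) (v : V) : poly :=
  \sum_(e : {set V} | interior_edge e && (v \in e)) inc_sign e [set v] * c1 e.

Definition H0_vanishes : Prop :=
  forall c0 : V -> poly, (forall v, interior_vertex v -> inPm m (c0 v)) ->
  exists c1 : {set V} -> poly,
    (forall e, interior_edge e -> inPm m (c1 e)) /\
    (forall v, interior_vertex v -> inJvert v (bd1 c1 v - c0 v)).

Definition H1_vanishes : Prop :=
  forall c1 : {set V} -> poly, (forall e, interior_edge e -> inPm m (c1 e)) ->
  (forall v, interior_vertex v -> inJvert v (bd1 c1 v)) ->
  exists c2 : {set V} -> poly,
    (forall s, s \in faces -> inPm m (c2 s)) /\
    (forall e, interior_edge e -> inJedge e (c1 e - bd2 c2 e)).

Definition lower_acyclic : Prop := H1_vanishes /\ H0_vanishes.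
End Complex.
End Mesh.

From HB Require Import structures.
From mathcomp Require Import all_boot all_order all_algebra.
From mathcomp Require Import reals.
From mathcomp Require Import mpoly.
Set Implicit Arguments. Unset Strict Implicit. Unset Printing Implicit Defensive.
Import Order.TTheory GRing.Theory Num.Theory.
Local Open Scope ring_scope.

(* Dropping the smoothness across tau makes every ideal J^s larger, so H_0
   stays zero. For H_1, take an s-cycle c and change its coefficient on tau
   so that its boundary at g' vanishes. The new chain is an r-cycle: away
   from tau nothing changed and J^s = J^r there, at g' the boundary is 0,
   and at g the ideal J^r_g is all of P_m because the edge tau' with
   r(tau') = -1 contributes J^r_tau' = P_m. Hence it is an r-boundary modulo
   J^r, and therefore c is an s-boundary modulo J^s, since on tau the
   quotient by J^s_tau = P_m is zero. *)

Section Signs.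
Variables (R : realType) (V : finType).

Lemma inc_signE (s t : {set V}) :
  inc_sign R s t =
  (-1) ^+ (\sum_(x in s :\: t) #|[set y in s | (enum_rank y < enum_rank x)%N]|).
Proof. by rewrite /inc_sign prodrXr. Qed.

Lemma inc_sign_mulss (s t : {set V}) : inc_sign R s t * inc_sign R s t = 1.
Proof. by rewrite inc_signE -[X in _ * X]mulr1 signrMK. Qed.

End Signs.

Section DegreeBound.
Variables (R : realType) (m : nat).
Implicit Types (p q : {mpoly R[2]}).

Lemma inPm0 : inPm m (0 : {mpoly R[2]}).
Proof. by rewrite /inPm msize0. Qed.

Lemma inPmD p q : inPm m p -> inPm m q -> inPm m (p + q).
Proof.
rewrite /inPm => hp hq; apply: leq_trans (msizeD_le _ _) _.
by rewrite geq_max hp hq.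
Qed.

Lemma inPmN p : inPm m p -> inPm m (- p).
Proof. by rewrite /inPm msizeN. Qed.

Lemma inPmB p q : inPm m p -> inPm m q -> inPm m (p - q).
Proof. by move=> hp hq; apply/inPmD/inPmN. Qed.

Lemma inPm_sum (I : finType) (P : pred I) (F : I -> {mpoly R[2]}) :
  (forall i, P i -> inPm m (F i)) -> inPm m (\sum_(i | P i) F i).
Proof. exact: (big_ind (inPm m) inPm0 inPmD). Qed.

Lemma inPm_signM (V : finType) (s t : {set V}) p :
  inPm m p -> inPm m (inc_sign R s t * p).
Proof. by rewrite inc_signE -signr_odd mulr_sign; case: ifP => // _; apply: inPmN. Qed.

End DegreeBound.

Section Mesh.
Variables (R : realType) (V : finType) (pos : V -> 'rV[R]_2).
Variables (faces : {set {set V}}) (m : nat).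
Implicit Types (rr : {set V} -> int) (e tau : {set V}) (v w : V).
Implicit Types (q : {mpoly R[2]}) (c : {set V} -> {mpoly R[2]}).

Lemma inPm_bd1 c v :
  (forall e, interior_edge faces e -> inPm m (c e)) -> inPm m (bd1 faces c v).
Proof. by move=> hc; apply: inPm_sum => e /andP[he _]; apply/inPm_signM/hc. Qed.

Lemma inPm_bd2 c e :
  (forall s, s \in faces -> inPm m (c s)) -> inPm m (bd2 faces c e).
Proof. by move=> hc; apply: inPm_sum => s /andP[hs _]; apply/inPm_signM/hc. Qed.

Lemma inJedge_mono (r1 r2 : {set V} -> int) e q :
  (expo r2 e <= expo r1 e)%N -> inJedge pos m r1 e q -> inJedge pos m r2 e q.
Proof.
move=> le_r21 [hq [h def_q]]; split=> //.
by exists (h * ell pos e ^+ (expo r1 e - expo r2 e)); rewrite def_q -mulrA -exprD subnK.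
Qed.

Lemma inJvert_mono (r1 r2 : {set V} -> int) v q :
  (forall e, interior_edge faces e -> v \in e -> (expo r2 e <= expo r1 e)%N) ->
  inJvert pos faces m r1 v q -> inJvert pos faces m r2 v q.
Proof.
move=> le_r21 [hq [h [hh def_q]]]; split=> //.
pose h' e := h e * ell pos e ^+ (expo r1 e - expo r2 e).
have h'E e : interior_edge faces e -> v \in e ->
    h' e * ell pos e ^+ expo r2 e = h e * ell pos e ^+ expo r1 e.
  by move=> he ve; rewrite -mulrA -exprD subnK ?le_r21.
exists h'; split; first by move=> e he ve; rewrite h'E ?hh.
by rewrite def_q; apply: eq_bigr => e /andP[he ve]; rewrite h'E.
Qed.

Lemma inJedge_expo0 rr e q :
  expo rr e = 0%N -> inPm m q -> inJedge pos m rr e q.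
Proof. by move=> e0 hq; split=> //; exists q; rewrite e0 mulr1. Qed.

Lemma inJvert_expo0 rr v e q :
  interior_edge faces e -> v \in e -> expo rr e = 0%N -> inPm m q ->
  inJvert pos faces m rr v q.
Proof.
move=> he ve e0 hq; split=> //.
exists (fun f => if f == e then q else 0); split.
  by move=> f _ _; case: eqP => [->|_]; rewrite ?e0 ?mulr1 ?mul0r ?inPm0.
rewrite (bigD1 e) /=; last by rewrite he ve.
rewrite eqxx e0 mulr1 big1 ?addr0 // => f /andP[_ /negbTE->].
exact: mul0r.
Qed.

Lemma inJvert0 rr v : inJvert pos faces m rr v 0.
Proof.
split; first exact: inPm0.
exists (fun _ => 0); split; first by move=> e _ _; rewrite mul0r inPm0.
by rewrite big1 // => e _; rewrite mul0r.
Qed.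

Lemma H0_vanishes_mono (r1 r2 : {set V} -> int) :
  (forall e, interior_edge faces e -> (expo r2 e <= expo r1 e)%N) ->
  H0_vanishes pos faces m r1 -> H0_vanishes pos faces m r2.
Proof.
move=> le_r21 hH0 c0 hc0; have [c1 [hc1 hJ]] := hH0 c0 hc0.
exists c1; split=> // v hv; apply: inJvert_mono (hJ v hv) => e he _.
exact: le_r21.
Qed.

Definition drop_smoothness rr tau : {set V} -> int :=
  fun e => if e == tau then -1 else rr e.

Lemma expo_drop_smoothness rr tau e :
  expo (drop_smoothness rr tau) e = if e == tau then 0%N else expo rr e.
Proof. by rewrite /expo /drop_smoothness; case: eqP. Qed.

Lemma expo_drop_smoothness_le rr tau e :
  (expo (drop_smoothness rr tau) e <= expo rr e)%N.
Proof. by rewrite expo_drop_smoothness; case: eqP. Qed.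

Definition cancel_bd1_at tau w c : {set V} -> {mpoly R[2]} :=
  fun e => if e == tau then c tau - inc_sign R tau [set w] * bd1 faces c w
           else c e.

Lemma inPm_cancel_bd1_at tau w c :
  (forall e, interior_edge faces e -> inPm m (c e)) ->
  forall e, interior_edge faces e -> inPm m (cancel_bd1_at tau w c e).
Proof.
move=> hc e he; rewrite /cancel_bd1_at; case: eqP => [<-|_]; last exact: hc.
by apply: inPmB; [exact: hc | apply/inPm_signM/inPm_bd1].
Qed.

Lemma bd1_cancel_bd1_at tau w c :
  interior_edge faces tau -> w \in tau -> bd1 faces (cancel_bd1_at tau w c) w = 0.
Proof.
move=> htau wt; set c' := cancel_bd1_at tau w c.
have c'E e : e != tau -> c' e = c e by rewrite /c' /cancel_bd1_at => /negbTE->.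
have tau_at_w : interior_edge faces tau && (w \in tau) by rewrite htau wt.
rewrite /bd1 (bigD1 tau) //=.
under eq_bigr => e /andP[_ ne] do rewrite c'E //.
rewrite [c' tau]/c' /cancel_bd1_at eqxx /bd1 (bigD1 tau) //=.
by rewrite mulrBr mulrA inc_sign_mulss mul1r addrAC subrr.
Qed.

Lemma bd1_cancel_bd1_at_notin tau w c v :
  v \notin tau -> bd1 faces (cancel_bd1_at tau w c) v = bd1 faces c v.
Proof.
move=> vt; apply: eq_bigr => e /andP[_ ve]; rewrite /cancel_bd1_at.
by case: eqP => // et; rewrite -et ve in vt.
Qed.

Lemma H1_vanishes_drop_smoothness rr tau g g' tau' :
  interior_edge faces tau -> tau = [set g; g'] ->
  interior_edge faces tau' -> g \in tau' -> expo rr tau' = 0%N ->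
  H1_vanishes pos faces m rr -> H1_vanishes pos faces m (drop_smoothness rr tau).
Proof.
move=> htau hends htau' gt' e0 hH1 c hc hcyc.
have g't : g' \in tau by rewrite hends !inE eqxx orbT.
set c' := cancel_bd1_at tau g' c.
have hc' := inPm_cancel_bd1_at tau g' hc.
have hcyc' v : interior_vertex faces v -> inJvert pos faces m rr v (bd1 faces c' v).
  move=> hv; have [|vt] := boolP (v \in tau).
    rewrite hends !inE => /orP[] /eqP->.
      exact: inJvert_expo0 htau' gt' e0 (inPm_bd1 _ hc').
    by rewrite bd1_cancel_bd1_at //; apply: inJvert0.
  rewrite bd1_cancel_bd1_at_notin //; apply: inJvert_mono (hcyc v hv) => e _ ve.
  by rewrite expo_drop_smoothness; case: eqP => // et; rewrite -et ve in vt.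
have [c2 [hc2 hbd]] := hH1 c' hc' hcyc'.
exists c2; split=> // e he; have [->|ne] := eqVneq e tau.
  apply: inJedge_expo0; first by rewrite expo_drop_smoothness eqxx.
  exact: inPmB (hc _ htau) (inPm_bd2 _ hc2).
have := hbd e he; rewrite /c' /cancel_bd1_at (negbTE ne).
by apply: inJedge_mono; rewrite expo_drop_smoothness (negbTE ne).
Qed.

End Mesh.

Theorem mainTheorem1 (R : realType) (V : finType) (pos : V -> 'rV[R]_2)
  (faces : {set {set V}}) (hT : is_planar_triangulation pos faces)
  (m : nat) (r : int) (hr : -1 <= r) (rr : {set V} -> int)
  (hrr : forall e, interior_edge faces e -> rr e = r \/ rr e = -1)
  (hQ : lower_acyclic pos faces m rr)
  (tau : {set V}) (g g' : V)
  (htau : interior_edge faces tau) (hends : tau = [set g; g'])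
  (hrtau : rr tau = r)
  (tau' : {set V}) (htau' : interior_edge faces tau') (hg : g \in tau')
  (hrtau' : rr tau' = -1) :
  lower_acyclic pos faces m (fun e => if e == tau then -1 else rr e).
Proof.
have free_tau' : expo rr tau' = 0%N by rewrite /expo hrtau'.
case: hQ => hH1 hH0; split.
  exact: H1_vanishes_drop_smoothness htau hends htau' hg free_tau' hH1.
by apply: H0_vanishes_mono hH0 => e _; apply: expo_drop_smoothness_le.
Qed.
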